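(* Let $d\ge 2$ be even and fix a base $\theta>1$. Let $(u_j)_{j\ge 1}$ be a real sequence and let ${\bm v}\in\mathbb{R}^d$ with $\|{\bm v}\|_2=1$. For each $n\ge 1$ let $\boldsymbol{u}_n=(u_1,\dots,u_n)^\top\in\mathbb{R}^n$ and $\boldsymbol{X}_n=\boldsymbol{u}_n{\bm v}^\top\in\mathbb{R}^{n\times d}$. Assume: (i) there exist constants $0<c\le C<\infty$ with $c\le |u_j|\le C$ for all $j$; (ii) $\sum_{j=1}^{n-1}|u_{j+1}^2-u_j^2| = o(n)$ as $n\to\infty$; (iii) (non-resonance of frequencies) $e^{2i\theta_k}\neq 1$ for all $1\le k\le d/2$, and $e^{i(\theta_k+\theta_l)}\neq 1$, $e^{i(\theta_k-\theta_l)}\neq 1$ for all $k\neq l$ (the paper justifies this by the $\theta_k$ and $(\theta_k\pm\theta_l)/2$ being irrational multiples of $\pi$). Then, as $n\to\infty$, $$\frac{\|\mathcal{R}(\boldsymbol{X}_n)\|_2}{\|\boldsymbol{X}_n\|_2}=\frac{1}{\sqrt 2}\max_{1\le k\le d/2}\alpha_k+o(1),$$ where $\alpha_k:=\sqrt{v_{2k-1}^2+v_{2k}^2}$, and moreover $\max_k\alpha_k\in[\sqrt{2/d},\,1]$.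
   Context: RoPE action: for $\boldsymbol{X}=[\boldsymbol{x}_1,\dots,\boldsymbol{x}_n]^\top\in\mathbb{R}^{n\times d}$ ($d$ even), $\mathcal{R}(\boldsymbol{X}):=[\boldsymbol{R}_1\boldsymbol{x}_1,\dots,\boldsymbol{R}_n\boldsymbol{x}_n]^\top$, where $\boldsymbol{R}_j=\mathrm{Diag}(\boldsymbol{R}_{j,\theta_1},\dots,\boldsymbol{R}_{j,\theta_{d/2}})\in\mathbb{R}^{d\times d}$ is block diagonal with $2\times2$ blocks $\boldsymbol{R}_{j,\theta_k}=\begin{bmatrix}\cos(j\theta_k)&-\sin(j\theta_k)\\ \sin(j\theta_k)&\cos(j\theta_k)\end{bmatrix}$ and frequencies $\theta_k=\theta^{-2(k-1)/d}$, $1\le k\le d/2$, for a base $\theta>1$. The $k$-th rotation plane of a vector ${\bm v}$ is the subvector $(v_{2k-1},v_{2k})$. $\|\cdot\|_2$ denotes the Euclidean norm of a vector and the spectral norm (largest singular value) of a matrix. *)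

From HB Require Import structures.
From mathcomp Require Import all_boot all_order all_algebra.
From mathcomp Require Import all_classical all_reals all_analysis.
Set Implicit Arguments. Unset Strict Implicit. Unset Printing Implicit Defensive.
Import Order.TTheory GRing.Theory Num.Theory.
Import numFieldNormedType.Exports.
Local Open Scope classical_set_scope.
Local Open Scope ring_scope.

Section RoPE.
Variable R : realType.

Definition vnorm (n : nat) (x : 'cV[R]_n) : R := Num.sqrt (\sum_(i < n) x i 0 ^+ 2).

Definition specnorm (m n : nat) (A : 'M[R]_(m, n)) : R :=
  sup [set vnorm (A *m x) | x in [set x : 'cV[R]_n | vnorm x <= 1]].

(* coordinate a (0-based) of v, 0 if out of range *)
Definition vcoord (d : nat) (v : 'cV[R]_d) (a : nat) : R :=
  odflt 0 (omap (fun i : 'I_d => v i 0) (insub a)).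

(* frequency theta_{k+1} = theta^(-2k/d), k 0-based (k = 0 .. d/2 - 1) *)
Definition freq (theta : R) (d k : nat) : R :=
  theta `^ (- ((2 * k)%:R / d%:R)).

(* block-diagonal rotation matrix R_j (d x d); 0-based coordinate a lies in
   rotation plane a./2, block rows (2k, 2k+1) = paper's (2k-1, 2k) *)
Definition rotmx (theta : R) (d j : nat) : 'M[R]_d :=
  \matrix_(a < d, b < d)
    let ang := j%:R * freq theta d (a./2)%N in
    if (a./2 == b./2)%N then
      if (a == b :> nat) then cos ang
      else if ~~ odd a then - sin ang else sin ang
    else 0.

(* RoPE action: row i (0-based) is position j = i+1: x_j |-> R_j x_j *)
Definition rope (theta : R) (n d : nat) (X : 'M[R]_(n, d)) : 'M[R]_(n, d) :=
  \matrix_(i < n, b < d) \sum_(a < d) rotmx theta d i.+1 b a * X i a.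

(* alpha_{k+1} = sqrt(v_{2k+1}^2 + v_{2k+2}^2), k 0-based *)
Definition alpha (d : nat) (v : 'cV[R]_d) (k : nat) : R :=
  Num.sqrt (vcoord v (2 * k) ^+ 2 + vcoord v (2 * k).+1 ^+ 2).

Definition max_alpha (d : nat) (v : 'cV[R]_d) : R :=
  \big[Num.max/0]_(k < d./2) alpha v k.

(* e^{i x} <> 1, written via Euler: cos x + i sin x <> 1 *)
Definition expi_ne1 (x : R) : Prop := ~ (cos x = 1 /\ sin x = 0).

Definition Xmat (d : nat) (u : nat -> R) (v : 'cV[R]_d) (n : nat) : 'M[R]_(n, d) :=
  \matrix_(i < n, c < d) (u i.+1 * v c 0).

End RoPE.

From HB Require Import structures.
From mathcomp Require Import all_boot all_order all_algebra.
From mathcomp Require Import all_classical all_reals all_analysis.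
From mathcomp Require Import ring lra zify.

Set Implicit Arguments.
Unset Strict Implicit.
Unset Printing Implicit Defensive.

Import Order.TTheory GRing.Theory Num.Theory.
Import numFieldNormedType.Exports.
Local Open Scope classical_set_scope.
Local Open Scope ring_scope.

(** Write S_n = u_1^2 + ... + u_n^2, so that ||X_n|| = sqrt S_n, and
    ||R(X_n) x||^2 = x^T G_n x with G_n(a,b) = sum_j u_j^2 (R_j v)_a (R_j v)_b.
    Since (R_j v)_a = v_a cos (j t_a) + (J v)_a sin (j t_a), where t_a is the frequency
    of the rotation plane of a and J is the quarter turn in every plane, each entry of
    G_n is a fixed combination of the weighted sums sum_j u_j^2 cos (j phi) and
    sum_j u_j^2 sin (j phi) with phi = t_a -+ t_b. If e^{i phi} <> 1, the partial sums
    of cos (j phi) and sin (j phi) are bounded by 1 / |sin (phi / 2)|, and summation by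
    parts bounds the weighted sums by O(C^2 + sum_j |u_{j+1}^2 - u_j^2|) = o(n) = o(S_n).
    Only phi = 0 survives, which happens inside a rotation plane, and there the surviving
    coefficient vanishes off the diagonal. Hence G_n / S_n tends to the diagonal matrix
    with entries alpha_(plane of a)^2 / 2, whose largest eigenvalue is
    (max_k alpha_k)^2 / 2. *)

Section SqrtBounds.
Variable R : rcfType.

Lemma sqrtr_le_add (x y e : R) : 0 <= e -> y <= x + e ->
  Num.sqrt y <= Num.sqrt x + Num.sqrt e.
Proof.
move=> e_ge0 yxe; have [y_le0|y_gt0] := lerP y 0.
  by rewrite ler0_sqrtr // addr_ge0 ?sqrtr_ge0.
have [x_le0|x_gt0] := lerP x 0.
  by rewrite (ler0_sqrtr x_le0) add0r ler_wsqrtr //; lra.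
rewrite -[leRHS]ger0_norm ?addr_ge0 ?sqrtr_ge0 // -sqrtr_sqr ler_wsqrtr //.
rewrite sqrrD !sqr_sqrtr ?(ltW x_gt0) //.
have := mulr_ge0 (sqrtr_ge0 x) (sqrtr_ge0 e); rewrite mulr2n; lra.
Qed.

Lemma dist_sqrt_le (mu e y : R) : 0 <= e ->
  Num.sqrt (mu - e) <= y <= Num.sqrt (mu + e) -> `|y - Num.sqrt mu| <= Num.sqrt e.
Proof.
move=> e_ge0 /andP[lo hi]; rewrite ler_norml; apply/andP; split.
  have := @sqrtr_le_add (mu - e) mu e e_ge0; rewrite subrK => /(_ (lexx _)); lra.
have := @sqrtr_le_add mu (mu + e) e e_ge0 (lexx _); lra.
Qed.

End SqrtBounds.

Lemma sup_sandwich (R : realType) (S : set R) (L M : R) :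
  (forall y, S y -> y <= M) -> (exists2 y, S y & L <= y) -> L <= sup S <= M.
Proof.
move=> ubM [y Sy Ly]; apply/andP; split; last by apply: ge_sup; [exists y|].
by apply: le_trans Ly (sup_upper_bound _ _) => //; split; [exists y | exists M].
Qed.

Section EuclideanNorm.
Variable R : realType.
Implicit Types (n : nat).

Lemma vnorm_ge0 n (x : 'cV[R]_n) : 0 <= vnorm x.
Proof. exact: sqrtr_ge0. Qed.

Lemma sqr_vnorm n (x : 'cV[R]_n) : vnorm x ^+ 2 = \sum_(i < n) x i 0 ^+ 2.
Proof. by rewrite sqr_sqrtr // sumr_ge0 // => i _; exact: sqr_ge0. Qed.

Lemma sum_sqr_le1 n (x : 'cV[R]_n) : vnorm x <= 1 -> \sum_(i < n) x i 0 ^+ 2 <= 1.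
Proof. by move=> x_le1; rewrite -sqr_vnorm exprn_ile1 ?vnorm_ge0. Qed.

Lemma normr_coord_le_vnorm n (x : 'cV[R]_n) (i : 'I_n) : `|x i 0| <= vnorm x.
Proof.
rewrite -sqrtr_sqr ler_wsqrtr // (bigD1 i) //= lerDl.
by apply: sumr_ge0 => j _; exact: sqr_ge0.
Qed.

Lemma normr_dot_le1 n (v x : 'cV[R]_n) : vnorm v = 1 -> vnorm x <= 1 ->
  `|\sum_(i < n) v i 0 * x i 0| <= 1.
Proof.
move=> v1 x_le1; have := sum_sqr_le1 x_le1; have := sqr_vnorm v; rewrite v1 expr1n.
move=> sv sx; apply: le_trans (ler_norm_sum _ _ _) _.
apply: (le_trans (y := \sum_(i < n) (v i 0 ^+ 2 + x i 0 ^+ 2) / 2)).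
  apply: ler_sum => i _; rewrite normrM -(real_normK (num_real (v i 0))).
  by rewrite -(real_normK (num_real (x i 0))) leif_mean_square.
by rewrite -mulr_suml big_split /= -sv; lra.
Qed.

Lemma specnorm_perturbed_diag m n (A : 'M[R]_(m, n)) (S : R) (delta : 'I_n -> R)
    (e : 'I_n -> 'I_n -> R) (i0 : 'I_n) :
  0 <= S -> (forall i, 0 <= delta i <= delta i0) ->
  (forall x, vnorm (A *m x) ^+ 2
     = S * (\sum_i x i 0 ^+ 2 * delta i + \sum_i \sum_j x i 0 * x j 0 * e i j)) ->
  Num.sqrt (S * (delta i0 - \sum_i \sum_j `|e i j|)) <= specnorm A
    <= Num.sqrt (S * (delta i0 + \sum_i \sum_j `|e i j|)).
Proof.
move=> S_ge0 delta_le Ax; set E := \sum_i \sum_j `|e i j|.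
have err_le x : vnorm x <= 1 -> `|\sum_i \sum_j x i 0 * x j 0 * e i j| <= E.
  move=> x_le1; apply: le_trans (ler_norm_sum _ _ _) _; apply: ler_sum => i _.
  apply: le_trans (ler_norm_sum _ _ _) _; apply: ler_sum => j _.
  rewrite !normrM ler_piMl // mulr_ile1 //.
    exact: le_trans (normr_coord_le_vnorm x i) x_le1.
  exact: le_trans (normr_coord_le_vnorm x j) x_le1.
have vnormE x : vnorm (A *m x) = Num.sqrt (vnorm (A *m x) ^+ 2).
  by rewrite sqrtr_sqr ger0_norm ?vnorm_ge0.
apply: sup_sandwich.
  move=> _ [x /= x_le1 <-]; rewrite vnormE Ax ler_wsqrtr // ler_wpM2l // lerD //.
    apply: (le_trans (y := \sum_i x i 0 ^+ 2 * delta i0)).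
      by apply: ler_sum => i _; rewrite ler_wpM2l ?sqr_ge0 //; case/andP: (delta_le i).
    by rewrite -mulr_suml ler_piMl ?sum_sqr_le1 //; case/andP: (delta_le i0).
  exact: le_trans (ler_norm _) (err_le x x_le1).
have e0_coord i : (delta_mx i0 0 : 'cV[R]_n) i 0 = (i == i0)%:R.
  by rewrite mxE andbT.
have sum_e0 (F : 'I_n -> R) : \sum_i (delta_mx i0 0 : 'cV[R]_n) i 0 ^+ 2 * F i = F i0.
  rewrite (bigD1 i0) //= e0_coord eqxx expr1n mul1r big1 ?addr0 // => i /negbTE i_ne.
  by rewrite e0_coord i_ne expr0n mul0r.
have e0_unit : vnorm (delta_mx i0 0 : 'cV[R]_n) = 1.
  rewrite /vnorm (eq_bigr (fun i => (delta_mx i0 0 : 'cV[R]_n) i 0 ^+ 2 * 1)).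
    by rewrite sum_e0 sqrtr1.
  by move=> i _; rewrite mulr1.
exists (vnorm (A *m delta_mx i0 0)).
  by exists (delta_mx i0 0) => //=; rewrite e0_unit.
rewrite vnormE Ax sum_e0 ler_wsqrtr // ler_wpM2l //.
have e0_le1 : vnorm (delta_mx i0 0 : 'cV[R]_n) <= 1 by rewrite e0_unit.
by have := err_le _ e0_le1; rewrite ler_norml => /andP[lo _]; lra.
Qed.

End EuclideanNorm.

Definition sumsq (R : realType) (u : nat -> R) (n : nat) : R :=
  \sum_(i < n) u i.+1 ^+ 2.

Lemma sumsq_ge0 (R : realType) (u : nat -> R) n : 0 <= sumsq u n.
Proof. by apply: sumr_ge0 => i _; exact: sqr_ge0. Qed.

Lemma sumsq_ge (R : realType) (u : nat -> R) (c : R) n : 0 <= c ->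
  (forall j, (1 <= j)%N -> c <= `|u j|) -> c ^+ 2 * n%:R <= sumsq u n.
Proof.
move=> c_ge0 u_ge; rewrite -[n in leLHS]card_ord mulr_natr -sumr_const.
apply: ler_sum => i _; rewrite -[u _ ^+ 2]real_normK ?num_real //.
by have := @u_ge i.+1 isT; nra.
Qed.

Section RankOne.
Variables (R : realType) (d : nat) (u : nat -> R) (v : 'cV[R]_d).

Lemma vnorm_Xmat_mul n (x : 'cV[R]_d) :
  vnorm (Xmat u v n *m x) = Num.sqrt (sumsq u n) * `|\sum_(c < d) v c 0 * x c 0|.
Proof.
rewrite /vnorm -sqrtr_sqr -sqrtrM ?sumsq_ge0 //; congr Num.sqrt.
rewrite /sumsq mulr_suml; apply: eq_bigr => i _.
rewrite mxE -exprMn mulr_sumr; congr (_ ^+ 2); apply: eq_bigr => c _.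
by rewrite mxE mulrA.
Qed.

Lemma specnorm_Xmat n : vnorm v = 1 -> specnorm (Xmat u v n) = Num.sqrt (sumsq u n).
Proof.
move=> v1; apply/eqP; rewrite eq_le andbC; apply: sup_sandwich.
  move=> _ [x /= x_le1 <-]; rewrite vnorm_Xmat_mul ler_piMr ?sqrtr_ge0 //.
  exact: normr_dot_le1.
exists (vnorm (Xmat u v n *m v)); first by exists v => //=; rewrite v1.
rewrite vnorm_Xmat_mul.
have -> : \sum_(c < d) v c 0 * v c 0 = 1 by rewrite -(expr1n R 2) -v1 sqr_vnorm.
by rewrite normr1 mulr1.
Qed.

End RankOne.

Section TrigSums.
Variable R : realType.
Implicit Types (phi : R) (m : nat).

Definition trig_sum_bound phi : R := `|sin (phi / 2)|^-1.

Lemma trig_sum_bound_ge0 phi : 0 <= trig_sum_bound phi.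
Proof. by rewrite invr_ge0. Qed.

Lemma expi_ne1_sin_half phi : expi_ne1 phi -> sin (phi / 2) != 0.
Proof.
move=> phi_ne1; apply/eqP => sin0; apply: phi_ne1.
rewrite (splitr phi) cosD sinD -expr2 cos2sin2 sin0; split; ring.
Qed.

Lemma sum_cos_mul_sin_half phi m :
  2 * sin (phi / 2) * \sum_(i < m) cos (i.+1%:R * phi)
  = sin (m%:R * phi + phi / 2) - sin (phi / 2).
Proof.
pose g i := sin (i%:R * phi + phi / 2).
transitivity (g m - g 0%N); last by rewrite /g mul0r add0r.
rewrite -telescope_sumr // big_mkord mulr_sumr; apply: eq_bigr => i _.
have -> : g i = sin (i.+1%:R * phi - phi / 2) by rewrite /g -natr1; congr sin; field.
by rewrite /g sinD sinB; ring.
Qed.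

Lemma sum_sin_mul_sin_half phi m :
  2 * sin (phi / 2) * \sum_(i < m) sin (i.+1%:R * phi)
  = cos (phi / 2) - cos (m%:R * phi + phi / 2).
Proof.
pose g i := - cos (i%:R * phi + phi / 2).
transitivity (g m - g 0%N); last by rewrite /g mul0r add0r opprK addrC.
rewrite -telescope_sumr // big_mkord mulr_sumr.
apply: eq_bigr => i _.
have -> : g i = - cos (i.+1%:R * phi - phi / 2).
  by rewrite /g -natr1; congr (- cos _); field.
by rewrite /g cosD cosB; ring.
Qed.

Lemma le_trig_sum_bound phi (s : R) : expi_ne1 phi ->
  `|2 * sin (phi / 2) * s| <= 2 -> `|s| <= trig_sum_bound phi.
Proof.
move=> /expi_ne1_sin_half; rewrite -normr_gt0 => sin_gt0.
rewrite !normrM ger0_norm // -mulrA => le2.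
by rewrite -(ler_pM2l sin_gt0) mulfV ?gt_eqF //; lra.
Qed.

Lemma normr_sum_cos_le phi m : expi_ne1 phi ->
  `|\sum_(i < m) cos (i.+1%:R * phi)| <= trig_sum_bound phi.
Proof.
move=> phi_ne1; apply: le_trig_sum_bound => //; rewrite sum_cos_mul_sin_half.
apply: le_trans (ler_normB _ _) _.
by have := sin_max (m%:R * phi + phi / 2); have := sin_max (phi / 2); lra.
Qed.

Lemma normr_sum_sin_le phi m : expi_ne1 phi ->
  `|\sum_(i < m) sin (i.+1%:R * phi)| <= trig_sum_bound phi.
Proof.
move=> phi_ne1; apply: le_trig_sum_bound => //; rewrite sum_sin_mul_sin_half.
apply: le_trans (ler_normB _ _) _.
by have := cos_max (m%:R * phi + phi / 2); have := cos_max (phi / 2); lra.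
Qed.

End TrigSums.

Lemma summation_by_parts (R : comPzRingType) (a c : nat -> R) n :
  \sum_(i < n.+1) a i * c i = a n * \sum_(i < n.+1) c i
    - \sum_(i < n) (a i.+1 - a i) * \sum_(k < i.+1) c k.
Proof.
elim: n => [|n IHn]; first by rewrite !big_ord_recr !big_ord0 /=; ring.
rewrite big_ord_recr IHn [\sum_(i < n.+2) c i]big_ord_recr.
by rewrite [\sum_(i < n.+1) (a i.+1 - a i) * _]big_ord_recr /=; ring.
Qed.

Lemma normr_sum_by_parts_le (R : numDomainType) (a c : nat -> R) (B : R) n :
  (forall m, `|\sum_(k < m) c k| <= B) ->
  `|\sum_(i < n.+1) a i * c i| <= B * (`|a n| + \sum_(i < n) `|a i.+1 - a i|).
Proof.
move=> cB; rewrite summation_by_parts mulrDr; apply: le_trans (ler_normB _ _) _.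
apply: lerD; first by rewrite normrM mulrC ler_wpM2r.
rewrite mulr_sumr; apply: le_trans (ler_norm_sum _ _ _) _; apply: ler_sum => i _.
by rewrite normrM mulrC ler_wpM2r.
Qed.

Section WeightedTrigSums.
Variables (R : realType) (u : nat -> R) (C : R).
Hypothesis u_le : forall j, (1 <= j)%N -> `|u j| <= C.

Definition sqr_variation n : R := \sum_(1 <= j < n) `|u j.+1 ^+ 2 - u j ^+ 2|.

Lemma sqr_variation_ge0 n : 0 <= sqr_variation n.
Proof. exact: sumr_ge0. Qed.

Definition sumsq_cos (phi : R) n := \sum_(i < n) u i.+1 ^+ 2 * cos (i.+1%:R * phi).
Definition sumsq_sin (phi : R) n := \sum_(i < n) u i.+1 ^+ 2 * sin (i.+1%:R * phi).

Lemma sumsq_cos0 n : sumsq_cos 0 n = sumsq u n.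
Proof. by apply: eq_bigr => i _; rewrite mulr0 cos0 mulr1. Qed.

Lemma sumsq_sin0 n : sumsq_sin 0 n = 0.
Proof. by apply: big1 => i _; rewrite mulr0 sin0 mulr0. Qed.

Lemma normr_sumsq_trig_le (f : R -> R) (phi B : R) n :
  (forall m, `|\sum_(k < m) f (k.+1%:R * phi)| <= B) ->
  `|\sum_(i < n) u i.+1 ^+ 2 * f (i.+1%:R * phi)| <= B * (C ^+ 2 + sqr_variation n).
Proof.
move=> fB; have B_ge0 : 0 <= B by apply: le_trans (fB 0%N); exact: normr_ge0.
case: n => [|n].
  by rewrite big_ord0 normr0 mulr_ge0 ?addr_ge0 ?sqr_ge0 ?sqr_variation_ge0.
apply: (le_trans (@normr_sum_by_parts_le _ (fun i => u i.+1 ^+ 2)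
                   (fun k => f (k.+1%:R * phi)) B n fB)).
rewrite ler_wpM2l // /sqr_variation big_add1 big_mkord lerD2r normrX.
by have := @u_le n.+1 isT; have := normr_ge0 (u n.+1); nra.
Qed.

Lemma normr_sumsq_cos_le (phi : R) n : expi_ne1 phi ->
  `|sumsq_cos phi n| <= trig_sum_bound phi * (C ^+ 2 + sqr_variation n).
Proof. by move=> phi_ne1; apply: normr_sumsq_trig_le => m; exact: normr_sum_cos_le. Qed.

Lemma normr_sumsq_sin_le (phi : R) n : expi_ne1 phi ->
  `|sumsq_sin phi n| <= trig_sum_bound phi * (C ^+ 2 + sqr_variation n).
Proof. by move=> phi_ne1; apply: normr_sumsq_trig_le => m; exact: normr_sum_sin_le. Qed.

End WeightedTrigSums.

Definition partner (a : nat) : nat := if odd a then a.-1 else a.+1.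

Lemma partner_half a : (partner a)./2 = a./2.
Proof. by rewrite /partner -!divn2; case: ifP => odd_a; lia. Qed.

Lemma partner_neq a : partner a != a.
Proof. by rewrite /partner; case: ifP => odd_a; lia. Qed.

Lemma eq_partner a b : a./2 = b./2 -> a != b -> b = partner a.
Proof. by rewrite /partner -!divn2 => ab_half ab_neq; case: ifP => odd_a; lia. Qed.

Section Coordinates.
Variables (R : realType) (d : nat) (v : 'cV[R]_d).

Lemma vcoordE (i : 'I_d) : vcoord v i = v i 0.
Proof. by rewrite /vcoord valK. Qed.

Lemma vcoord_out a : (d <= a)%N -> vcoord v a = 0.
Proof. by move=> da; rewrite /vcoord insubF // ltnNge da. Qed.

Lemma sum_eq_vcoord (c : R) k :
  \sum_(a < d) (if a == k :> nat then c * vcoord v a else 0) = c * vcoord v k.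
Proof.
rewrite -big_mkcond (big_ord1_eq _ (fun a => c * vcoord v a)); case: ltnP => // dk.
by rewrite vcoord_out ?mulr0.
Qed.

End Coordinates.

Lemma sum_ord_double (V : nmodType) (f : nat -> V) M :
  \sum_(k < M) (f (2 * k)%N + f (2 * k).+1) = \sum_(a < M.*2) f a.
Proof.
elim: M => [|M IHM]; first by rewrite !big_ord0.
rewrite big_ord_recr IHM doubleS !big_ord_recr /= mul2n addrA.
by congr (_ + _ + _); apply: eq_bigr.
Qed.

Section PlaneNorms.
Variables (R : realType) (d : nat) (v : 'cV[R]_d).

Lemma alpha_ge0 k : 0 <= alpha v k.
Proof. exact: sqrtr_ge0. Qed.

Lemma sqr_alpha k : alpha v k ^+ 2 = vcoord v (2 * k) ^+ 2 + vcoord v (2 * k).+1 ^+ 2.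
Proof. by rewrite sqr_sqrtr // addr_ge0 ?sqr_ge0. Qed.

Lemma alpha_le_max k : (k < d./2)%N -> alpha v k <= max_alpha v.
Proof. by move=> kd; exact: (le_bigmax _ (fun k : 'I_d./2 => alpha v k) (Ordinal kd)). Qed.

Lemma max_alpha_ge0 : 0 <= max_alpha v.
Proof. exact: bigmax_ge_id. Qed.

Lemma exists_alpha_eq_max : (0 < d./2)%N ->
  exists2 k, (k < d./2)%N & alpha v k = max_alpha v.
Proof.
move=> d_gt0; exists [arg max_(k > Ordinal d_gt0) alpha v k]%O => //.
by rewrite /max_alpha (bigmax_eq_arg _ (Ordinal d_gt0)) // => k _; exact: alpha_ge0.
Qed.

Lemma sum_sqr_alpha : ~~ odd d -> \sum_(k < d./2) alpha v k ^+ 2 = vnorm v ^+ 2.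
Proof.
move=> d_even; under eq_bigr do rewrite sqr_alpha.
rewrite (sum_ord_double (fun a => vcoord v a ^+ 2)) even_halfK // sqr_vnorm.
by apply: eq_bigr => a _; rewrite vcoordE.
Qed.

Lemma max_alpha_bounds : vnorm v = 1 -> ~~ odd d -> (2 <= d)%N ->
  Num.sqrt (2 / d%:R) <= max_alpha v <= 1.
Proof.
move=> v1 d_even d_ge2; have := sum_sqr_alpha d_even; rewrite v1 expr1n => sum1.
have max_ge0 := max_alpha_ge0; apply/andP; split; last first.
  apply: bigmax_le => // k _; have := alpha_ge0 k.
  suff : alpha v k ^+ 2 <= 1 by nra.
  rewrite -sum1 (bigD1 k) //= lerDl; apply: sumr_ge0 => i _; exact: sqr_ge0.
have d2_gt0 : 0 < (d./2)%:R :> R by rewrite ltr0n half_gt0.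
have max_sqr_ge : 1 <= (d./2)%:R * max_alpha v ^+ 2.
  rewrite mulr_natl -[in leRHS](card_ord d./2) -sumr_const -sum1.
  apply: ler_sum => k _.
  by have := alpha_le_max (ltn_ord k); have := alpha_ge0 k; nra.
rewrite -[leRHS]ger0_norm // -sqrtr_sqr ler_wsqrtr //.
rewrite -[in d%:R](even_halfK d_even) -muln2 natrM ler_pdivrMr ?mulr_gt0 //; nra.
Qed.

End PlaneNorms.

Lemma invn_cvg0 (R : realType) : (fun n : nat => (n%:R : R)^-1) @ \oo --> 0.
Proof. by rewrite -cvg_shiftS; exact: cvg_harmonic. Qed.

Section Rope.
Variables (R : realType) (d : nat) (theta : R) (u : nat -> R) (v : 'cV[R]_d).

Definition plane_freq (a : nat) : R := freq theta d a./2.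

Definition vcoord_perp (a : nat) : R :=
  if odd a then vcoord v a.-1 else - vcoord v a.+1.

Definition rot_vcoord (j a : nat) : R :=
  vcoord v a * cos (j%:R * plane_freq a) + vcoord_perp a * sin (j%:R * plane_freq a).

Lemma rotmx_mul_vcoord j (b : 'I_d) :
  \sum_(a < d) rotmx theta d j b a * vcoord v a = rot_vcoord j b.
Proof.
pose ang := j%:R * plane_freq b.
pose s := if odd b then sin ang else - sin ang.
transitivity (\sum_(a < d) ((if a == b :> nat then cos ang * vcoord v a else 0)
                           + (if a == partner b :> nat then s * vcoord v a else 0))).
  apply: eq_bigr => a _; rewrite mxE.
  have [-> | a_neq_b] := eqVneq (a : nat) b.
    by rewrite eqxx eq_sym (negbTE (partner_neq b)) addr0.
  rewrite add0r; have [ab_half | ab_half] := eqVneq b./2 a./2.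
    rewrite -(eq_partner ab_half) ?eqxx 1?eq_sym //= /s /ang /plane_freq.
    by case: odd.
  rewrite mul0r ifF //; apply: contraNF ab_half => /eqP ->.
  by rewrite partner_half.
rewrite big_split /= !sum_eq_vcoord /rot_vcoord /vcoord_perp /s /partner -/ang.
by case: odd; ring.
Qed.

Lemma rope_XmatE n (i : 'I_n) (b : 'I_d) :
  rope theta (Xmat u v n) i b = u i.+1 * rot_vcoord i.+1 b.
Proof.
rewrite mxE -rotmx_mul_vcoord mulr_sumr; apply: eq_bigr => a _.
by rewrite [Xmat u v n i a]mxE vcoordE mulrCA.
Qed.

Definition gram (a b : nat) (n : nat) : R :=
  \sum_(i < n) u i.+1 ^+ 2 * (rot_vcoord i.+1 a * rot_vcoord i.+1 b).

Lemma sqr_vnorm_rope_mul n (x : 'cV[R]_d) :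
  vnorm (rope theta (Xmat u v n) *m x) ^+ 2
  = \sum_(a < d) \sum_(b < d) x a 0 * x b 0 * gram a b n.
Proof.
rewrite sqr_vnorm.
under eq_bigr => i _ do rewrite mxE expr2 mulr_suml; rewrite exchange_big.
apply: eq_bigr => a _; under eq_bigr => i _ do rewrite mulr_sumr; rewrite exchange_big.
apply: eq_bigr => b _; rewrite /gram mulr_sumr; apply: eq_bigr => i _.
by rewrite !rope_XmatE; ring.
Qed.

Definition ccos_diff a b := (vcoord v a * vcoord v b + vcoord_perp a * vcoord_perp b) / 2.
Definition ccos_add a b := (vcoord v a * vcoord v b - vcoord_perp a * vcoord_perp b) / 2.
Definition csin_add a b := (vcoord v a * vcoord_perp b + vcoord_perp a * vcoord v b) / 2.
Definition csin_diff a b := (vcoord_perp a * vcoord v b - vcoord v a * vcoord_perp b) / 2.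

Lemma rot_vcoord_mul j a b : rot_vcoord j a * rot_vcoord j b =
  ccos_diff a b * cos (j%:R * (plane_freq a - plane_freq b))
  + ccos_add a b * cos (j%:R * (plane_freq a + plane_freq b))
  + csin_add a b * sin (j%:R * (plane_freq a + plane_freq b))
  + csin_diff a b * sin (j%:R * (plane_freq a - plane_freq b)).
Proof.
rewrite /rot_vcoord !mulrDr !mulrN !cosD !sinD !cosN !sinN.
by rewrite /ccos_diff /ccos_add /csin_add /csin_diff; field.
Qed.

Lemma gram_trig a b n : gram a b n =
  ccos_diff a b * sumsq_cos u (plane_freq a - plane_freq b) n
  + ccos_add a b * sumsq_cos u (plane_freq a + plane_freq b) n
  + csin_add a b * sumsq_sin u (plane_freq a + plane_freq b) n
  + csin_diff a b * sumsq_sin u (plane_freq a - plane_freq b) n.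
Proof.
rewrite /gram /sumsq_cos /sumsq_sin !mulr_sumr -!big_split /=.
by apply: eq_bigr => i _; rewrite rot_vcoord_mul; ring.
Qed.

Lemma sqr_alpha_half a : alpha v a./2 ^+ 2 = vcoord v a ^+ 2 + vcoord_perp a ^+ 2.
Proof.
rewrite sqr_alpha mul2n /vcoord_perp; case: ifP => odd_a.
  by rewrite odd_halfK // prednK ?odd_gt0 // addrC.
by rewrite even_halfK ?odd_a // sqrrN.
Qed.

Lemma ccos_diff_partner a : ccos_diff a (partner a) = 0.
Proof.
rewrite /ccos_diff /vcoord_perp /partner; case: ifP => odd_a.
  by case: a odd_a => [//|a] /= /negbTE odd_a; rewrite odd_a; ring.
by rewrite /= odd_a /=; ring.
Qed.

Definition gram_lim a b := if a./2 == b./2 then ccos_diff a b else 0.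

Lemma gram_limE a b : gram_lim a b = if a == b then alpha v a./2 ^+ 2 / 2 else 0.
Proof.
rewrite /gram_lim; have [-> | ab_neq] := eqVneq a b.
  by rewrite eqxx sqr_alpha_half /ccos_diff.
by case: eqP => // /eq_partner /(_ ab_neq) ->; rewrite ccos_diff_partner.
Qed.

Lemma gram_sub_lim a b n : gram a b n - gram_lim a b * sumsq u n =
  ccos_diff a b * (sumsq_cos u (plane_freq a - plane_freq b) n
                   - (if a./2 == b./2 then sumsq u n else 0))
  + ccos_add a b * sumsq_cos u (plane_freq a + plane_freq b) n
  + csin_add a b * sumsq_sin u (plane_freq a + plane_freq b) n
  + csin_diff a b * sumsq_sin u (plane_freq a - plane_freq b) n.
Proof. by rewrite gram_trig /gram_lim; case: ifP => _; ring. Qed.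

Variable C : R.
Hypothesis u_le : forall j, (1 <= j)%N -> `|u j| <= C.
Hypothesis d_even : ~~ odd d.
Hypothesis freq_double : forall k, (k < d./2)%N -> expi_ne1 (2 * freq theta d k).
Hypothesis freq_pair : forall k l, (k < d./2)%N -> (l < d./2)%N -> k <> l ->
  expi_ne1 (freq theta d k + freq theta d l) /\ expi_ne1 (freq theta d k - freq theta d l).

Lemma half_ord_lt (a : 'I_d) : (a./2 < d./2)%N.
Proof. by rewrite ltn_half_double even_halfK. Qed.

Lemma expi_ne1_plane_freq_add (a b : 'I_d) : expi_ne1 (plane_freq a + plane_freq b).
Proof.
rewrite /plane_freq; have [-> | /eqP ab_half] := eqVneq a./2 b./2.
  by rewrite -mulr2n -mulr_natl; exact/freq_double/half_ord_lt.
exact: (freq_pair (half_ord_lt a) (half_ord_lt b) ab_half).1.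
Qed.

Lemma expi_ne1_plane_freq_sub (a b : 'I_d) : a./2 != b./2 ->
  expi_ne1 (plane_freq a - plane_freq b).
Proof.
by move=> /eqP ab_half; exact: (freq_pair (half_ord_lt a) (half_ord_lt b) ab_half).2.
Qed.

(* Inside a rotation plane the difference frequency is 0 and [trig_sum_bound 0] is the junk
   value [0^-1 = 0]; the corresponding sums are then exact ([sumsq] and [0]), so nothing is
   lost. *)
Definition gram_err_coef a b : R :=
  (`|ccos_diff a b| + `|csin_diff a b|) * trig_sum_bound (plane_freq a - plane_freq b)
  + (`|ccos_add a b| + `|csin_add a b|) * trig_sum_bound (plane_freq a + plane_freq b).

Lemma gram_err_coef_ge0 a b : 0 <= gram_err_coef a b.
Proof. by rewrite addr_ge0 // mulr_ge0 ?addr_ge0 ?trig_sum_bound_ge0. Qed.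

Lemma normr_gram_sub_lim_le (a b : 'I_d) n :
  `|gram a b n - gram_lim a b * sumsq u n|
  <= gram_err_coef a b * (C ^+ 2 + sqr_variation u n).
Proof.
have cos_add := normr_sumsq_cos_le u_le n (@expi_ne1_plane_freq_add a b).
have sin_add := normr_sumsq_sin_le u_le n (@expi_ne1_plane_freq_add a b).
set W := C ^+ 2 + sqr_variation u n in cos_add sin_add *.
have W_ge0 : 0 <= W by rewrite addr_ge0 ?sqr_ge0 ?sqr_variation_ge0.
set Bsub := trig_sum_bound (plane_freq a - plane_freq b).
have [cos_sub sin_sub] :
    `|sumsq_cos u (plane_freq a - plane_freq b) n - (if a./2 == b./2 then sumsq u n else 0)|
      <= Bsub * W /\ `|sumsq_sin u (plane_freq a - plane_freq b) n| <= Bsub * W.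
  have Bsub_ge0 : 0 <= Bsub * W by rewrite mulr_ge0 ?trig_sum_bound_ge0.
  have [ab_half | ab_half] := eqVneq a./2 b./2.
    by rewrite /plane_freq ab_half subrr sumsq_cos0 sumsq_sin0 subrr normr0.
  have ab_ne1 := expi_ne1_plane_freq_sub ab_half.
  by rewrite subr0; split; [exact: normr_sumsq_cos_le | exact: normr_sumsq_sin_le].
have normrM_le (c x B : R) : `|x| <= B -> `|c * x| <= `|c| * B.
  by move=> xB; rewrite normrM ler_wpM2l.
have normrD4 (x1 x2 x3 x4 : R) : `|x1 + x2 + x3 + x4| <= `|x1| + `|x2| + `|x3| + `|x4|.
  rewrite (le_trans (ler_normD _ _)) // lerD2r (le_trans (ler_normD _ _)) //.
  by rewrite lerD2r ler_normD.
rewrite gram_sub_lim /gram_err_coef -/Bsub; apply: le_trans (normrD4 _ _ _ _) _.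
have := normrM_le (ccos_diff a b) _ _ cos_sub.
have := normrM_le (csin_diff a b) _ _ sin_sub.
have := normrM_le (ccos_add a b) _ _ cos_add.
have := normrM_le (csin_add a b) _ _ sin_add.
lra.
Qed.

Definition gram_err n : R :=
  \sum_(a < d) \sum_(b < d) `|gram a b n / sumsq u n - gram_lim a b|.

Definition gram_err_const : R := \sum_(a < d) \sum_(b < d) gram_err_coef a b.

Lemma gram_err_ge0 n : 0 <= gram_err n.
Proof. by apply: sumr_ge0 => a _; apply: sumr_ge0. Qed.

Lemma gram_err_const_ge0 : 0 <= gram_err_const.
Proof. by apply: sumr_ge0 => a _; apply: sumr_ge0 => b _; exact: gram_err_coef_ge0. Qed.

Lemma gram_err_le n : 0 < sumsq u n ->
  gram_err n <= gram_err_const * ((C ^+ 2 + sqr_variation u n) / sumsq u n).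
Proof.
move=> S_gt0; rewrite /gram_err /gram_err_const mulr_suml; apply: ler_sum => a _.
rewrite mulr_suml; apply: ler_sum => b _.
have -> : gram a b n / sumsq u n - gram_lim a b
          = (gram a b n - gram_lim a b * sumsq u n) / sumsq u n.
  by field; rewrite gt_eqF.
rewrite normrM normfV (gtr0_norm S_gt0) mulrA ler_pM2r ?invr_gt0 //.
exact: normr_gram_sub_lim_le.
Qed.

Lemma sqr_vnorm_rope_mulE n (x : 'cV[R]_d) : 0 < sumsq u n ->
  vnorm (rope theta (Xmat u v n) *m x) ^+ 2 = sumsq u n *
    (\sum_(a < d) x a 0 ^+ 2 * (alpha v a./2 ^+ 2 / 2)
     + \sum_(a < d) \sum_(b < d) x a 0 * x b 0 * (gram a b n / sumsq u n - gram_lim a b)).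
Proof.
move=> S_gt0; have diag : \sum_(a < d) x a 0 ^+ 2 * (alpha v a./2 ^+ 2 / 2)
    = \sum_(a < d) \sum_(b < d) x a 0 * x b 0 * gram_lim a b.
  apply: eq_bigr => a _; rewrite (bigD1 a) //= gram_limE eqxx expr2 big1 ?addr0 // => b ba.
  by rewrite gram_limE ifF ?mulr0 //; apply: contraNF ba => /eqP/val_inj ->.
rewrite sqr_vnorm_rope_mul diag -big_split mulr_sumr; apply: eq_bigr => a _.
rewrite -big_split mulr_sumr; apply: eq_bigr => b _ /=.
by field; rewrite gt_eqF.
Qed.

Lemma specnorm_rope_bounds n : (2 <= d)%N -> 0 < sumsq u n ->
  Num.sqrt (sumsq u n * (max_alpha v ^+ 2 / 2 - gram_err n))
    <= specnorm (rope theta (Xmat u v n))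
    <= Num.sqrt (sumsq u n * (max_alpha v ^+ 2 / 2 + gram_err n)).
Proof.
move=> d_ge2 S_gt0; have [k kd alpha_k] : exists2 k, (k < d./2)%N & alpha v k = max_alpha v.
  by apply: exists_alpha_eq_max; rewrite half_gt0.
have k2d : (2 * k < d)%N by rewrite -(even_halfK d_even) mul2n ltn_double.
have delta_le (a : 'I_d) : 0 <= alpha v a./2 ^+ 2 / 2 <= max_alpha v ^+ 2 / 2.
  have := alpha_le_max v (half_ord_lt a); have := alpha_ge0 v a./2.
  by move=> ? ?; apply/andP; split; nra.
have := specnorm_perturbed_diag (i0 := Ordinal k2d) (ltW S_gt0) _
  (fun x => sqr_vnorm_rope_mulE x S_gt0).
by rewrite /= mul2n doubleK alpha_k => /(_ delta_le).
Qed.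

Lemma rope_ratio_dist n : vnorm v = 1 -> (2 <= d)%N -> 0 < sumsq u n ->
  `|specnorm (rope theta (Xmat u v n)) / specnorm (Xmat u v n)
    - (Num.sqrt 2)^-1 * max_alpha v| <= Num.sqrt (gram_err n).
Proof.
move=> v1 d_ge2 S_gt0; rewrite specnorm_Xmat //.
have sqrtS_gt0 : 0 < Num.sqrt (sumsq u n) by rewrite sqrtr_gt0.
have -> : (Num.sqrt 2)^-1 * max_alpha v = Num.sqrt (max_alpha v ^+ 2 / 2).
  by rewrite sqrtrM ?sqr_ge0 // sqrtr_sqr ger0_norm ?max_alpha_ge0 // sqrtrV // mulrC.
apply: dist_sqrt_le; first exact: gram_err_ge0.
have /andP[lo hi] := specnorm_rope_bounds d_ge2 S_gt0.
rewrite !sqrtrM ?(ltW S_gt0) // in lo hi.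
by apply/andP; split; [rewrite ler_pdivlMr // mulrC | rewrite ler_pdivrMr // mulrC].
Qed.

Variable c : R.
Hypothesis c_gt0 : 0 < c.
Hypothesis u_ge : forall j, (1 <= j)%N -> c <= `|u j|.

Lemma sumsq_gt0 n : (0 < n)%N -> 0 < sumsq u n.
Proof.
move=> n_gt0; apply: (lt_le_trans _ (sumsq_ge n (ltW c_gt0) u_ge)).
by rewrite mulr_gt0 ?exprn_gt0 ?ltr0n.
Qed.

Lemma gram_err_cvg0 : (fun n => sqr_variation u n / n%:R) @ \oo --> 0 ->
  gram_err @ \oo --> 0.
Proof.
move=> var_o; pose K := gram_err_const / c ^+ 2.
have bound0 : (fun n => K * (C ^+ 2 * n%:R^-1 + sqr_variation u n / n%:R)) @ \oo --> 0.
  rewrite -(mulr0 K) -[X in K * X](addr0 0) -[X in K * (X + 0)](mulr0 (C ^+ 2)).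
  apply: cvgM; first exact: cvg_cst.
  by apply: cvgD => //; apply: cvgM; [exact: cvg_cst | exact: invn_cvg0].
apply: (squeeze_cvgr _ (cvg_cst 0) bound0).
near=> n; have n_gt0 : (0 < n)%N by near: n; exact: nbhs_infty_gt.
rewrite gram_err_ge0 /=; apply: (le_trans (gram_err_le (sumsq_gt0 n_gt0))).
have -> : K * (C ^+ 2 * n%:R^-1 + sqr_variation u n / n%:R)
          = gram_err_const * ((C ^+ 2 + sqr_variation u n) / (c ^+ 2 * n%:R)).
  by rewrite /K; field; rewrite pnatr_eq0 -lt0n n_gt0 gt_eqF.
rewrite ler_wpM2l ?gram_err_const_ge0 // ler_wpM2l ?addr_ge0 ?sqr_ge0 ?sqr_variation_ge0 //.
by rewrite lef_pV2 ?posrE ?sumsq_gt0 ?mulr_gt0 ?exprn_gt0 ?ltr0n // sumsq_ge ?ltW.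
Unshelve. all: by end_near.
Qed.

Lemma rope_ratio_cvg : vnorm v = 1 -> (2 <= d)%N ->
  (fun n => sqr_variation u n / n%:R) @ \oo --> 0 ->
  (fun n => specnorm (rope theta (Xmat u v n)) / specnorm (Xmat u v n)
            - (Num.sqrt 2)^-1 * max_alpha v) @ \oo --> 0.
Proof.
move=> v1 d_ge2 var_o; have sqrt_err0 : Num.sqrt \o gram_err @ \oo --> 0.
  rewrite -sqrtr0; apply: continuous_cvg; first exact: sqrt_continuous.
  exact: gram_err_cvg0.
have opp_sqrt_err0 : - (Num.sqrt \o gram_err) @ \oo --> 0.
  by rewrite -oppr0; exact: cvgN.
apply: (squeeze_cvgr _ opp_sqrt_err0 sqrt_err0); near=> n; rewrite -ler_norml.
apply: rope_ratio_dist => //; apply: sumsq_gt0.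
by near: n; exact: nbhs_infty_gt.
Unshelve. all: by end_near.
Qed.

End Rope.

Theorem lemma1 (R : realType) (d : nat) (theta : R) (u : nat -> R) (v : 'cV[R]_d) :
  (2 <= d)%N -> ~~ odd d -> 1 < theta ->
  vnorm v = 1 ->
  (exists c C : R, 0 < c /\ c <= C /\
     forall j : nat, (1 <= j)%N -> c <= `|u j| <= C) ->
  (fun n : nat => (\sum_(1 <= j < n) `|u j.+1 ^+ 2 - u j ^+ 2|) / n%:R) @ \oo --> 0 ->
  (forall k : nat, (k < d./2)%N -> expi_ne1 (2 * freq theta d k)) ->
  (forall k l : nat, (k < d./2)%N -> (l < d./2)%N -> k <> l ->
     expi_ne1 (freq theta d k + freq theta d l) /\
     expi_ne1 (freq theta d k - freq theta d l)) ->
  (fun n : nat => specnorm (rope theta (Xmat u v n)) / specnorm (Xmat u v n)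
                  - (Num.sqrt 2)^-1 * max_alpha v) @ \oo --> 0
  /\ Num.sqrt (2 / d%:R) <= max_alpha v <= 1.
Proof.
move=> d_ge2 d_even _ v1 [c [C [c_gt0 [_ u_bounds]]]] var_o freq_double freq_pair.
have u_le j : (1 <= j)%N -> `|u j| <= C by move=> /u_bounds /andP[].
have u_ge j : (1 <= j)%N -> c <= `|u j| by move=> /u_bounds /andP[].
split; last exact: max_alpha_bounds.
exact: (rope_ratio_cvg u_le d_even freq_double freq_pair c_gt0 u_ge v1 d_ge2 var_o).
Qed.
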